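(* Let $A\in\mathbb{C}^{n\times n}$ and $r\in\mathbb{R}$. Then the vertically projected Davis-Wielandt shell $\mathcal{W}_{\ge r}(A)$ is compact and convex.
   Context: The Davis-Wielandt shell of $A$ is $\mathcal{DW}(A)=\{(\mathrm{Re}\,x^*Ax,\ \mathrm{Im}\,x^*Ax,\ \|Ax\|^2): x\in\mathbb{C}^n,\|x\|=1\}\subset\mathbb{R}^3$. For $r\in\mathbb{R}$, the vertically projected DW-shell is $\mathcal{W}_{\ge r}(A)=\{(p,q)\in\mathbb{R}^2: (p,q,h^2)\in\mathcal{DW}(A)\text{ for some } h\ge r\}$ (it is empty when $r$ exceeds the largest singular value of $A$). *)

From HB Require Import structures.
From mathcomp Require Import all_boot all_order all_algebra.
From mathcomp Require Import complex.
From mathcomp Require Import all_classical all_reals all_analysis.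

Set Implicit Arguments.
Unset Strict Implicit.
Unset Printing Implicit Defensive.

Import Order.TTheory GRing.Theory Num.Theory.
Import numFieldNormedType.Exports.
Local Open Scope ring_scope.
Local Open Scope classical_set_scope.

Definition cvnorm (R : realType) (n : nat) (x : 'cV[R[i]]_n) : R :=
  Num.sqrt (\sum_(i < n) (complex.Re (x i ord0) ^+ 2 + complex.Im (x i ord0) ^+ 2)).

Definition qform (R : realType) (n : nat) (A : 'M[R[i]]_n) (x : 'cV[R[i]]_n)
  : R[i] :=
  ((map_mx (@conjc R) x)^T *m A *m x) ord0 ord0.

Definition DW (R : realType) (n : nat) (A : 'M[R[i]]_n) : set (R * R * R) :=
  [set t | exists x : 'cV[R[i]]_n, cvnorm x = 1 /\
     t = (complex.Re (qform A x), complex.Im (qform A x), cvnorm (A *m x) ^+ 2)].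

Definition W_ge (R : realType) (n : nat) (A : 'M[R[i]]_n) (r : R) : set (R * R) :=
  [set pq | exists h : R, r <= h /\ DW A (pq.1, pq.2, h ^+ 2)].

Definition convex2 (R : realType) (S : set (R * R)) : Prop :=
  forall (u v : R * R) (t : R), S u -> S v -> 0 <= t -> t <= 1 ->
    S ((1 - t) * u.1 + t * v.1, (1 - t) * u.2 + t * v.2).

From HB Require Import structures.
From mathcomp Require Import all_boot all_order all_algebra.
From mathcomp Require Import complex.
From mathcomp Require Import all_classical all_reals all_analysis.
From mathcomp Require Import ring lra.
Import Order.TTheory GRing.Theory Num.Theory.
Import numFieldNormedType.Exports.
Local Open Scope ring_scope.
Local Open Scope classical_set_scope.

Set Implicit Arguments.
Unset Strict Implicit.
Unset Printing Implicit Defensive.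

(* Compactness: W_{>=r}(A) is the image of the compact set of unit vectors x with
   ||Ax|| >= r (seen in R^(2n)) under the continuous map x |-> x^* A x.
   Convexity: take unit vectors x, y and an orthonormal basis (x, e) of a plane
   containing them.  For unit vectors z = a x + b e, the three quantities
   Re z^* A z, Im z^* A z and ||Az||^2 are affine functions of the Bloch vector of
   (a, b), which ranges over the whole unit sphere of R^3.  The convex combination
   of the Bloch vectors of x and y lies in the unit ball; moving from it along a
   direction on which the first two affine functions are constant, towards the
   side where the third one does not decrease, until the sphere is reached gives
   a unit z with z^* A z on the segment and
   ||Az||^2 >= (1 - t) ||Ax||^2 + t ||Ay||^2 >= r^2. *)

(* Real and imaginary parts in R; Num.Theory's 'Re would land in R[i]. *)
Local Notation Re := (@complex.Re _).
Local Notation Im := (@complex.Im _).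

Section ComplexParts.
Variable R : rcfType.
Implicit Types x y : R[i].

Lemma Re_add x y : Re (x + y) = Re x + Re y. Proof. by case: x y => [? ?] []. Qed.
Lemma Im_add x y : Im (x + y) = Im x + Im y. Proof. by case: x y => [? ?] []. Qed.
Lemma Re_opp x : Re (- x) = - Re x. Proof. by case: x. Qed.
Lemma Im_opp x : Im (- x) = - Im x. Proof. by case: x. Qed.
Lemma Re_mul x y : Re (x * y) = Re x * Re y - Im x * Im y.
Proof. by case: x y => [? ?] []. Qed.
Lemma Im_mul x y : Im (x * y) = Re x * Im y + Im x * Re y.
Proof. by case: x y => [? ?] []. Qed.
Lemma Re_conj x : Re x^*%C = Re x. Proof. by case: x. Qed.
Lemma Im_conj x : Im x^*%C = - Im x. Proof. by case: x. Qed.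

Lemma Re_sum (I : Type) (r : seq I) (P : pred I) (F : I -> R[i]) :
  Re (\sum_(i <- r | P i) F i) = \sum_(i <- r | P i) Re (F i).
Proof. by elim/big_rec2: _ => // i y1 y2 _ <-; rewrite Re_add. Qed.

Lemma Im_sum (I : Type) (r : seq I) (P : pred I) (F : I -> R[i]) :
  Im (\sum_(i <- r | P i) F i) = \sum_(i <- r | P i) Im (F i).
Proof. by elim/big_rec2: _ => // i y1 y2 _ <-; rewrite Im_add. Qed.

Lemma complex_eq x y : Re x = Re y -> Im x = Im y -> x = y.
Proof. by case: x y => [? ?] [? ?] /= -> ->. Qed.

End ComplexParts.

Ltac simpc_parts :=
  rewrite ?(Re_add, Im_add, Re_opp, Im_opp, Re_mul, Im_mul, Re_conj, Im_conj) /=.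
Ltac complex_ring := apply: complex_eq; simpc_parts; ring.

Section InnerProduct.
Variable R : rcfType.
Variable n : nat.
Implicit Types (u w z : 'cV[R[i]]_n) (a b : R[i]).

Definition cdot u w : R[i] := \sum_(i < n) (u i ord0)^*%C * w i ord0.

Lemma cdotDl u w z a b :
  cdot (a *: u + b *: w) z = a^*%C * cdot u z + b^*%C * cdot w z.
Proof.
rewrite /cdot !mulr_sumr -big_split.
by apply: eq_bigr => i _; rewrite !mxE; complex_ring.
Qed.

Lemma cdotDr u w z a b :
  cdot z (a *: u + b *: w) = a * cdot z u + b * cdot z w.
Proof.
rewrite /cdot !mulr_sumr -big_split.
by apply: eq_bigr => i _; rewrite !mxE; complex_ring.
Qed.

Lemma cdotZl u w a : cdot (a *: u) w = a^*%C * cdot u w.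
Proof.
by rewrite /cdot mulr_sumr; apply: eq_bigr => i _; rewrite !mxE; complex_ring.
Qed.

Lemma cdotZr u w a : cdot u (a *: w) = a * cdot u w.
Proof.
by rewrite /cdot mulr_sumr; apply: eq_bigr => i _; rewrite !mxE; complex_ring.
Qed.

Lemma cdotC u w : cdot w u = (cdot u w)^*%C.
Proof.
apply: complex_eq; rewrite ?Re_conj ?Im_conj /cdot ?Re_sum ?Im_sum -?sumrN;
  by apply: eq_bigr => i _; simpc_parts; ring.
Qed.

Lemma Re_cdot_self u :
  Re (cdot u u) = \sum_(i < n) (Re (u i ord0) ^+ 2 + Im (u i ord0) ^+ 2).
Proof. by rewrite /cdot Re_sum; apply: eq_bigr => i _; simpc_parts; ring. Qed.

Lemma cdot_self u : cdot u u = (Re (cdot u u))%:C%C.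
Proof.
apply: complex_eq => //=; rewrite /cdot Im_sum big1 // => i _; simpc_parts; ring.
Qed.

Lemma Re_cdot_self_ge0 u : 0 <= Re (cdot u u).
Proof. by rewrite Re_cdot_self sumr_ge0 // => i _; rewrite addr_ge0 ?sqr_ge0. Qed.

Lemma Re_cdot_self_eq0 u : Re (cdot u u) = 0 -> u = 0.
Proof.
rewrite Re_cdot_self => /psumr_eq0P u0; apply/matrixP => i j; rewrite (ord1 j) mxE.
have /eqP := u0 (fun i _ => addr_ge0 (sqr_ge0 _) (sqr_ge0 _)) i isT.
case: (u i ord0) => a b /=.
by rewrite paddr_eq0 ?sqr_ge0 // !sqrf_eq0 => /andP[/eqP -> /eqP ->].
Qed.

Lemma cdot_mulmx_comb (P Q : 'M[R[i]]_n) u w a b :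
  cdot (P *m (a *: u + b *: w)) (Q *m (a *: u + b *: w)) =
  a^*%C * a * cdot (P *m u) (Q *m u) + a^*%C * b * cdot (P *m u) (Q *m w)
  + b^*%C * a * cdot (P *m w) (Q *m u) + b^*%C * b * cdot (P *m w) (Q *m w).
Proof. by rewrite !mulmxDr -!scalemxAr cdotDl !cdotDr; ring. Qed.

End InnerProduct.

Lemma qformE (R : realType) n (A : 'M[R[i]]_n) x : qform A x = cdot x (A *m x).
Proof. by rewrite /qform -mulmxA mxE; apply: eq_bigr => i _; rewrite !mxE. Qed.

Lemma cvnorm_ge0 (R : realType) n (u : 'cV[R[i]]_n) : 0 <= cvnorm u.
Proof. exact: sqrtr_ge0. Qed.

Lemma cvnorm_sqr (R : realType) n (u : 'cV[R[i]]_n) : cvnorm u ^+ 2 = Re (cdot u u).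
Proof. by rewrite /cvnorm sqr_sqrtr -Re_cdot_self ?Re_cdot_self_ge0. Qed.

Lemma cvnorm_eq1 (R : realType) n (u : 'cV[R[i]]_n) : cvnorm u = 1 <-> cdot u u = 1.
Proof.
split=> [u1|]; first by rewrite cdot_self -cvnorm_sqr u1 expr1n.
move/(congr1 Re); rewrite -cvnorm_sqr /= => u1.
by have := cvnorm_ge0 u; nra.
Qed.

Section UnitSphere.
Variable R : rcfType.

Lemma orthogonal_vector3 (a1 a2 a3 b1 b2 b3 : R) : exists d1 d2 d3 : R,
  [/\ 0 < d1 ^+ 2 + d2 ^+ 2 + d3 ^+ 2, a1 * d1 + a2 * d2 + a3 * d3 = 0
    & b1 * d1 + b2 * d2 + b3 * d3 = 0].
Proof.
pose c1 := a2 * b3 - a3 * b2; pose c2 := a3 * b1 - a1 * b3; pose c3 := a1 * b2 - a2 * b1.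
have [c_gt0|c_le0] := ltP 0 (c1 ^+ 2 + c2 ^+ 2 + c3 ^+ 2).
  by exists c1, c2, c3; split; rewrite // /c1 /c2 /c3; ring.
have [c1_0 c2_0 c3_0] : [/\ c1 = 0, c2 = 0 & c3 = 0] by split; nra.
(* a x b = 0: a vector orthogonal to a nonzero one of a, b is orthogonal to both *)
have [a23|a23] := ltP 0 (a2 ^+ 2 + a3 ^+ 2).
  exists 0, a3, (- a2); split; [nra | ring | by move: c1_0; rewrite /c1; lra].
have [a13|a13] := ltP 0 (a1 ^+ 2 + a3 ^+ 2).
  exists (- a3), 0, a1; split; [nra | ring | by move: c2_0; rewrite /c2; lra].
have [a12|a12] := ltP 0 (a1 ^+ 2 + a2 ^+ 2).
  exists a2, (- a1), 0; split; [nra | ring | by move: c3_0; rewrite /c3; lra].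
have [-> -> ->] : [/\ a1 = 0, a2 = 0 & a3 = 0] by split; nra.
have [b23|b23] := ltP 0 (b2 ^+ 2 + b3 ^+ 2).
  by exists 0, b3, (- b2); split; [nra | ring | ring].
have [b13|b13] := ltP 0 (b1 ^+ 2 + b3 ^+ 2).
  by exists (- b3), 0, b1; split; [nra | ring | ring].
exists 1, 0, 0; split; [nra | ring | nra].
Qed.

Lemma ball_ray_sphere (u1 u2 u3 d1 d2 d3 : R) :
  u1 ^+ 2 + u2 ^+ 2 + u3 ^+ 2 <= 1 -> 0 < d1 ^+ 2 + d2 ^+ 2 + d3 ^+ 2 ->
  exists2 s, 0 <= s &
    (u1 + s * d1) ^+ 2 + (u2 + s * d2) ^+ 2 + (u3 + s * d3) ^+ 2 = 1.
Proof.
move=> u_le1 D_gt0.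
set D := _ + _ + d3 ^+ 2 in D_gt0.
pose B := u1 * d1 + u2 * d2 + u3 * d3.
pose C := 1 - (u1 ^+ 2 + u2 ^+ 2 + u3 ^+ 2).
have DC_ge0 : 0 <= D * C by apply: mulr_ge0; [exact: ltW | rewrite subr_ge0].
pose q := Num.sqrt (B ^+ 2 + D * C).
have q_ge0 : 0 <= q := sqrtr_ge0 _.
have q2 : q ^+ 2 = B ^+ 2 + D * C by rewrite sqr_sqrtr // addr_ge0 ?sqr_ge0.
have B_le_q : B <= q by nra.
exists ((q - B) / D); first by apply: divr_ge0; [rewrite subr_ge0 | exact: ltW].
have D_neq0 : D != 0 by rewrite gt_eqF.
set s := (q - B) / D.
have s_root : D * s ^+ 2 + 2 * B * s = C.
  by rewrite /s -[C](mulKf D_neq0) -[D * C](addKr (B ^+ 2)) -q2; field.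
by rewrite -[RHS](subrK C) -{2}s_root /C /D /B; ring.
Qed.

Lemma ball_lift_sphere (a1 a2 a3 b1 b2 b3 c1 c2 c3 u1 u2 u3 : R) :
  u1 ^+ 2 + u2 ^+ 2 + u3 ^+ 2 <= 1 -> exists v1 v2 v3 : R,
  [/\ v1 ^+ 2 + v2 ^+ 2 + v3 ^+ 2 = 1,
      a1 * v1 + a2 * v2 + a3 * v3 = a1 * u1 + a2 * u2 + a3 * u3,
      b1 * v1 + b2 * v2 + b3 * v3 = b1 * u1 + b2 * u2 + b3 * u3
    & c1 * u1 + c2 * u2 + c3 * u3 <= c1 * v1 + c2 * v2 + c3 * v3].
Proof.
move=> u_le1.
have [d1 [d2 [d3 [d_gt0 ad bd]]]] := orthogonal_vector3 a1 a2 a3 b1 b2 b3.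
wlog cd_ge0 : d1 d2 d3 d_gt0 ad bd / 0 <= c1 * d1 + c2 * d2 + c3 * d3.
  move=> hwlog; have [|cd_lt0] := leP 0 (c1 * d1 + c2 * d2 + c3 * d3); first exact: hwlog.
  by apply: (hwlog (- d1) (- d2) (- d3)); rewrite ?sqrrN //; lra.
have [s s_ge0 sph] := ball_ray_sphere u_le1 d_gt0.
exists (u1 + s * d1), (u2 + s * d2), (u3 + s * d3); split => //.
- by rewrite -[RHS]addr0 -(mulr0 s) -ad; ring.
- by rewrite -[RHS]addr0 -(mulr0 s) -bd; ring.
- by rewrite -subr_ge0 (_ : _ - _ = s * (c1 * d1 + c2 * d2 + c3 * d3)) ?mulr_ge0 //; ring.
Qed.

Definition affine3 (F : R -> R -> R -> R) := forall v1 v2 v3,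
  F v1 v2 v3 = F 0 0 0 + v1 * (F 1 0 0 - F 0 0 0) + v2 * (F 0 1 0 - F 0 0 0)
    + v3 * (F 0 0 1 - F 0 0 0).

Lemma affine3_comb F t x1 x2 x3 y1 y2 y3 : affine3 F ->
  F ((1 - t) * x1 + t * y1) ((1 - t) * x2 + t * y2) ((1 - t) * x3 + t * y3) =
  (1 - t) * F x1 x2 x3 + t * F y1 y2 y3.
Proof. by move=> F_aff; rewrite F_aff (F_aff x1) (F_aff y1); ring. Qed.

Lemma affine_sphere_above_chord (F1 F2 F3 : R -> R -> R -> R) x1 x2 x3 y1 y2 y3 t :
  affine3 F1 -> affine3 F2 -> affine3 F3 ->
  x1 ^+ 2 + x2 ^+ 2 + x3 ^+ 2 = 1 -> y1 ^+ 2 + y2 ^+ 2 + y3 ^+ 2 = 1 ->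
  0 <= t <= 1 -> exists v1 v2 v3,
  [/\ v1 ^+ 2 + v2 ^+ 2 + v3 ^+ 2 = 1,
      F1 v1 v2 v3 = (1 - t) * F1 x1 x2 x3 + t * F1 y1 y2 y3,
      F2 v1 v2 v3 = (1 - t) * F2 x1 x2 x3 + t * F2 y1 y2 y3
    & (1 - t) * F3 x1 x2 x3 + t * F3 y1 y2 y3 <= F3 v1 v2 v3].
Proof.
move=> F1_aff F2_aff F3_aff x_1 y_1 /andP[t_ge0 t_le1].
set u1 := (1 - t) * x1 + t * y1; set u2 := (1 - t) * x2 + t * y2.
set u3 := (1 - t) * x3 + t * y3.
have u_le1 : u1 ^+ 2 + u2 ^+ 2 + u3 ^+ 2 <= 1.
  have -> : u1 ^+ 2 + u2 ^+ 2 + u3 ^+ 2 =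
      (1 - t) * (x1 ^+ 2 + x2 ^+ 2 + x3 ^+ 2) + t * (y1 ^+ 2 + y2 ^+ 2 + y3 ^+ 2)
      - t * (1 - t) * ((x1 - y1) ^+ 2 + (x2 - y2) ^+ 2 + (x3 - y3) ^+ 2).
    by rewrite /u1 /u2 /u3; ring.
  rewrite x_1 y_1 !mulr1 subrK lerBlDr lerDl.
  by rewrite !mulr_ge0 ?subr_ge0 ?addr_ge0 ?sqr_ge0.
have [v1 [v2 [v3 [v_1 e1 e2 e3]]]] := ball_lift_sphere
  (F1 1 0 0 - F1 0 0 0) (F1 0 1 0 - F1 0 0 0) (F1 0 0 1 - F1 0 0 0)
  (F2 1 0 0 - F2 0 0 0) (F2 0 1 0 - F2 0 0 0) (F2 0 0 1 - F2 0 0 0)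
  (F3 1 0 0 - F3 0 0 0) (F3 0 1 0 - F3 0 0 0) (F3 0 0 1 - F3 0 0 0) u_le1.
exists v1, v2, v3; rewrite -!affine3_comb // -/u1 -/u2 -/u3; split => //.
- by rewrite (F1_aff v1) (F1_aff u1); lra.
- by rewrite (F2_aff v1) (F2_aff u1); lra.
- by rewrite (F3_aff v1) (F3_aff u1); lra.
Qed.

End UnitSphere.

Section BlochSphere.
Variable R : rcfType.
Implicit Types (a b : R[i]) (s : R).

Definition sqnorm2 a b := Re (a^*%C * a) + Re (b^*%C * b).
Definition bloch1 a b := 2 * Re (a^*%C * b).
Definition bloch2 a b := 2 * Im (a^*%C * b).
Definition bloch3 a b := Re (a^*%C * a) - Re (b^*%C * b).

(* The sesquilinear form with Gram matrix [[m11, m12], [m21, m22]], evaluated at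
   a vector of C^2 with squared norm s and Bloch vector (v1, v2, v3). *)
Definition bloch_form s (v1 v2 v3 : R) (m11 m12 m21 m22 : R[i]) : R[i] :=
  ((s + v3) / 2)%:C%C * m11 + (v1 / 2 +i* (v2 / 2))%C * m12
  + (v1 / 2 -i* (v2 / 2))%C * m21 + ((s - v3) / 2)%:C%C * m22.

Lemma sesq2_bloch a b (m11 m12 m21 m22 : R[i]) :
  a^*%C * a * m11 + a^*%C * b * m12 + b^*%C * a * m21 + b^*%C * b * m22 =
  bloch_form (sqnorm2 a b) (bloch1 a b) (bloch2 a b) (bloch3 a b) m11 m12 m21 m22.
Proof.
by rewrite /bloch_form /sqnorm2 /bloch1 /bloch2 /bloch3; apply: complex_eq;
  simpc_parts; field.
Qed.

Lemma bloch_sphere a b :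
  bloch1 a b ^+ 2 + bloch2 a b ^+ 2 + bloch3 a b ^+ 2 = sqnorm2 a b ^+ 2.
Proof. by rewrite /sqnorm2 /bloch1 /bloch2 /bloch3; simpc_parts; ring. Qed.

Lemma Re_bloch_form_affine s (m11 m12 m21 m22 : R[i]) :
  affine3 (fun v1 v2 v3 => Re (bloch_form s v1 v2 v3 m11 m12 m21 m22)).
Proof. by move=> v1 v2 v3; rewrite /bloch_form; simpc_parts; field. Qed.

Lemma Im_bloch_form_affine s (m11 m12 m21 m22 : R[i]) :
  affine3 (fun v1 v2 v3 => Im (bloch_form s v1 v2 v3 m11 m12 m21 m22)).
Proof. by move=> v1 v2 v3; rewrite /bloch_form; simpc_parts; field. Qed.

Lemma bloch_surjective (v1 v2 v3 : R) : v1 ^+ 2 + v2 ^+ 2 + v3 ^+ 2 = 1 ->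
  exists a b, [/\ sqnorm2 a b = 1, bloch1 a b = v1, bloch2 a b = v2 & bloch3 a b = v3].
Proof.
move=> v_1; rewrite /sqnorm2 /bloch1 /bloch2 /bloch3.
have [v3N1|v3_neq] := eqVneq v3 (-1).
  have [-> ->] : v1 = 0 /\ v2 = 0 by split; nra.
  by exists 0, 1; rewrite v3N1; split; simpc_parts; ring.
have v3_gt : 0 < 1 + v3.
  suff : -1 < v3 by lra.
  by rewrite lt_neqAle eq_sym v3_neq /=; nra.
pose al := Num.sqrt ((1 + v3) / 2).
have al2 : al ^+ 2 = (1 + v3) / 2 by rewrite sqr_sqrtr // divr_ge0 // ltW.
have al_neq0 : al != 0 by rewrite sqrtr_eq0 -ltNge; apply: divr_gt0.
exists al%:C%C, (v1 / (2 * al) +i* (v2 / (2 * al)))%C; simpc_parts.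
have v1_sq : v1 ^+ 2 = 1 - v3 ^+ 2 - v2 ^+ 2 by lra.
have v3E : 1 + v3 = 2 * al ^+ 2 by rewrite al2; field.
have sq c : c / (2 * al) * (c / (2 * al)) = c ^+ 2 / (2 * (1 + v3)).
  by rewrite v3E; field.
have al_al : al * al = (1 + v3) / 2 by rewrite -expr2.
split; rewrite !mulNr ?opprK ?sq ?al_al ?v1_sq;
  by [field | field; rewrite gt_eqF].
Qed.

End BlochSphere.

Section SpanOfTwo.
Variable R : rcfType.
Variable n : nat.
Implicit Types (x y z e : 'cV[R[i]]_n) (P Q : 'M[R[i]]_n) (a b g : R[i]).

Definition span_form P Q x e s v1 v2 v3 :=
  bloch_form s v1 v2 v3 (cdot (P *m x) (Q *m x)) (cdot (P *m x) (Q *m e))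
    (cdot (P *m e) (Q *m x)) (cdot (P *m e) (Q *m e)).

Lemma cdot_span2 P Q x e a b :
  cdot (P *m (a *: x + b *: e)) (Q *m (a *: x + b *: e)) =
  span_form P Q x e (sqnorm2 a b) (bloch1 a b) (bloch2 a b) (bloch3 a b).
Proof. by rewrite cdot_mulmx_comb sesq2_bloch. Qed.

Lemma cdot_span2_orthonormal x e a b :
  cdot x x = 1 -> cdot x e = 0 -> cdot e e = 1 ->
  cdot (a *: x + b *: e) (a *: x + b *: e) = (sqnorm2 a b)%:C%C.
Proof.
move=> x_1 xe ee; rewrite cdotDl !cdotDr x_1 xe ee (cdotC x e) xe conjc0.
by rewrite /sqnorm2; apply: complex_eq; simpc_parts; ring.
Qed.

Lemma gram_schmidt_pair x y : cdot x x = 1 -> cdot y y = 1 ->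
  (exists2 g, y = g *: x & g^*%C * g = 1) \/
  exists g b e, [/\ cdot x e = 0, cdot e e = 1 & y = g *: x + b *: e].
Proof.
move=> x_1 y_1; pose g := cdot x y; pose w := y - g *: x.
have xw : cdot x w = 0.
  rewrite (_ : w = 1 *: y + (- g) *: x) ?cdotDr ?x_1 /g; first by ring.
  by rewrite scale1r scaleNr.
have [w0|w_neq0] := eqVneq (Re (cdot w w)) 0.
  move/Re_cdot_self_eq0/eqP: w0; rewrite subr_eq0 => /eqP y_gx; left; exists g => //.
  by move: y_1; rewrite y_gx cdotZl cdotZr x_1 mulr1.
have w_gt0 : 0 < Re (cdot w w) by rewrite lt_def w_neq0 Re_cdot_self_ge0.
pose be := Num.sqrt (Re (cdot w w)).
have be2 : be ^+ 2 = Re (cdot w w) by rewrite sqr_sqrtr ?ltW.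
have be_neq0 : be != 0 by rewrite sqrtr_eq0 -ltNge.
right; exists g, be%:C%C, ((be^-1)%:C%C *: w); split.
- by rewrite cdotZr xw mulr0.
- by rewrite cdotZl cdotZr cdot_self -be2; apply: complex_eq; simpc_parts; field.
- have be_inv : be%:C%C * (be^-1)%:C%C = 1 :> R[i].
    by apply: complex_eq; simpc_parts; field.
  by rewrite scalerA be_inv scale1r /w addrC subrK.
Qed.

End SpanOfTwo.

Section ConvexStep.
Variable R : rcfType.
Variable n : nat.
Variable A : 'M[R[i]]_n.

Lemma span_convex_step (x y : 'cV[R[i]]_n) t :
  cdot x x = 1 -> cdot y y = 1 -> 0 <= t <= 1 -> exists z, [/\ cdot z z = 1,
    Re (cdot z (A *m z)) = (1 - t) * Re (cdot x (A *m x)) + t * Re (cdot y (A *m y)),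
    Im (cdot z (A *m z)) = (1 - t) * Im (cdot x (A *m x)) + t * Im (cdot y (A *m y))
  & (1 - t) * Re (cdot (A *m x) (A *m x)) + t * Re (cdot (A *m y) (A *m y))
      <= Re (cdot (A *m z) (A *m z))].
Proof.
move=> x_1 y_1 t01.
have [[g y_def gg] | [g [h [e [xe ee y_def]]]]] := gram_schmidt_pair x_1 y_1;
  subst y.
  exists x; rewrite -!scalemxAr !cdotZl !cdotZr !mulrA gg !mul1r.
  by split => //; lra.
pose F P Q (part : R[i] -> R) v1 v2 v3 := part (span_form P Q x e 1 v1 v2 v3).
have F_span P Q part a b : sqnorm2 a b = 1 ->
    part (cdot (P *m (a *: x + b *: e)) (Q *m (a *: x + b *: e))) =
    F P Q part (bloch1 a b) (bloch2 a b) (bloch3 a b).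
  by move=> ab1; rewrite cdot_span2 ab1.
have unit_span a b : cdot (a *: x + b *: e) (a *: x + b *: e) = (sqnorm2 a b)%:C%C.
  exact: cdot_span2_orthonormal.
have unit_sq a b : cdot (a *: x + b *: e) (a *: x + b *: e) = 1 -> sqnorm2 a b = 1.
  by rewrite unit_span => -[->].
have x_span : x = 1 *: x + 0 *: e by rewrite scale1r scale0r addr0.
have x_sq : sqnorm2 (1 : R[i]) 0 = 1 by apply: unit_sq; rewrite -x_span.
have y_sq : sqnorm2 g h = 1 := unit_sq _ _ y_1.
have F_x P Q part : part (cdot (P *m x) (Q *m x)) =
    F P Q part (bloch1 1 0) (bloch2 1 0) (bloch3 1 0).
  by rewrite x_span (F_span _ _ _ _ _ x_sq).
have sphere (a b : R[i]) : sqnorm2 a b = 1 ->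
    bloch1 a b ^+ 2 + bloch2 a b ^+ 2 + bloch3 a b ^+ 2 = 1.
  by move=> ab1; rewrite bloch_sphere ab1 expr1n.
have [v1 [v2 [v3 [v_1 E1 E2 E3]]]] := affine_sphere_above_chord
  (Re_bloch_form_affine 1 _ _ _ _ : affine3 (F 1%:M A (@complex.Re R)))
  (Im_bloch_form_affine 1 _ _ _ _ : affine3 (F 1%:M A (@complex.Im R)))
  (Re_bloch_form_affine 1 _ _ _ _ : affine3 (F A A (@complex.Re R)))
  (sphere _ _ x_sq) (sphere _ _ y_sq) t01.
have [a [c [ac1 v1E v2E v3E]]] := bloch_surjective v_1; subst v1 v2 v3.
exists (a *: x + c *: e); split.
- by rewrite unit_span ac1.
- rewrite -[X in cdot X _]mul1mx (F_span _ _ _ _ _ ac1) E1.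
  by rewrite -!F_x -(F_span _ _ _ _ _ y_sq) !mul1mx.
- rewrite -[X in cdot X _]mul1mx (F_span _ _ _ _ _ ac1) E2.
  by rewrite -!F_x -(F_span _ _ _ _ _ y_sq) !mul1mx.
- by rewrite !(F_span _ _ (@complex.Re R) _ _ ac1) !F_x !(F_span _ _ _ _ _ y_sq).
Qed.

End ConvexStep.

Section ComplexContinuity.
Variables (R : realType) (T : topologicalType).

Definition ccontinuous (f : T -> R[i]) :=
  continuous (fun t => Re (f t)) /\ continuous (fun t => Im (f t)).

Lemma ccontinuous_cst (c : R[i]) : ccontinuous (fun=> c).
Proof. by split; exact: cst_continuous. Qed.

Lemma ccontinuousD (f g : T -> R[i]) :
  ccontinuous f -> ccontinuous g -> ccontinuous (fun t => f t + g t).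
Proof.
move=> [fRe fIm] [gRe gIm]; split=> t.
  by under eq_fun do rewrite Re_add; apply: continuousD; [exact: fRe | exact: gRe].
by under eq_fun do rewrite Im_add; apply: continuousD; [exact: fIm | exact: gIm].
Qed.

Lemma ccontinuousM (f g : T -> R[i]) :
  ccontinuous f -> ccontinuous g -> ccontinuous (fun t => f t * g t).
Proof.
move=> [fRe fIm] [gRe gIm]; split=> t.
  under eq_fun do rewrite Re_mul.
  exact: continuousD (continuousM (fRe t) (gRe t))
    (continuousN (continuousM (fIm t) (gIm t))).
under eq_fun do rewrite Im_mul.
exact: continuousD (continuousM (fRe t) (gIm t)) (continuousM (fIm t) (gRe t)).
Qed.

Lemma ccontinuousJ (f : T -> R[i]) : ccontinuous f -> ccontinuous (fun t => (f t)^*%C).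
Proof.
move=> [fRe fIm]; split=> t; first by under eq_fun do rewrite Re_conj; exact: fRe.
by under eq_fun do rewrite Im_conj; apply: continuousN; exact: fIm.
Qed.

Lemma ccontinuous_sum (I : Type) (s : seq I) (F : I -> T -> R[i]) :
  (forall i, ccontinuous (F i)) -> ccontinuous (fun t => \sum_(i <- s) F i t).
Proof.
move=> F_cont; split.
  under eq_fun do rewrite Re_sum.
  by apply: continuous_big => [|i _]; [exact: add_continuous | exact: (F_cont i).1].
under eq_fun do rewrite Im_sum.
by apply: continuous_big => [|i _]; [exact: add_continuous | exact: (F_cont i).2].
Qed.

Variable n : nat.

Definition ccontinuous_cV (f : T -> 'cV[R[i]]_n) :=
  forall i, ccontinuous (fun t => f t i ord0).

Lemma ccontinuous_cV_mulmx (P : 'M[R[i]]_n) f :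
  ccontinuous_cV f -> ccontinuous_cV (fun t => P *m f t).
Proof.
move=> f_cont i; under eq_fun do rewrite mxE.
apply: ccontinuous_sum => j.
by apply: ccontinuousM; [exact: ccontinuous_cst | exact: f_cont].
Qed.

Lemma ccontinuous_cdot f g : ccontinuous_cV f -> ccontinuous_cV g ->
  ccontinuous (fun t => cdot (f t) (g t)).
Proof.
move=> f_cont g_cont; apply: ccontinuous_sum => i.
by apply: ccontinuousM; [apply: ccontinuousJ|]; [exact: f_cont | exact: g_cont].
Qed.

Lemma continuous_cvnorm f : ccontinuous_cV f -> continuous (fun t => cvnorm (f t)).
Proof.
move=> f_cont t; under eq_fun do rewrite /cvnorm -Re_cdot_self.
exact: continuous_comp ((ccontinuous_cdot f_cont f_cont).1 t) (@sqrt_continuous R _).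
Qed.

End ComplexContinuity.

Section RealCoordinates.
Variables (R : realType) (n : nat).

Definition cV_of_rV (v : 'rV[R]_(n + n)) : 'cV[R[i]]_n :=
  \col_i (v ord0 (lshift n i) +i* v ord0 (rshift n i))%C.

Definition rV_of_cV (x : 'cV[R[i]]_n) : 'rV[R]_(n + n) :=
  \row_j match fintype.split j with inl i => Re (x i ord0) | inr i => Im (x i ord0) end.

Lemma rV_of_cVK : cancel rV_of_cV cV_of_rV.
Proof.
move=> x; apply/matrixP => i j; rewrite (ord1 j) !mxE.
by rewrite (unsplitK (inl i)) (unsplitK (inr i)); case: (x i ord0).
Qed.

Lemma ccontinuous_cV_of_rV : ccontinuous_cV cV_of_rV.
Proof.
by move=> i; split; under eq_fun do rewrite mxE /=; exact: coord_continuous.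
Qed.

Lemma cvnorm_cV_of_rV v : cvnorm (cV_of_rV v) ^+ 2 = \sum_(j < n + n) v ord0 j ^+ 2.
Proof.
rewrite cvnorm_sqr Re_cdot_self big_split_ord /= -big_split /=.
by apply: eq_bigr => i _; rewrite !mxE.
Qed.

End RealCoordinates.

Section ProjectedShell.
Variables (R : realType) (n : nat) (A : 'M[R[i]]_n) (r : R).

Lemma W_geP pq : W_ge A r pq <->
  exists2 x, cvnorm x = 1 & r <= cvnorm (A *m x) /\ pq = (Re (qform A x), Im (qform A x)).
Proof.
case: pq => p q; split=> [[h [r_le_h [x [x_1 [-> -> h2]]]]] | [x x_1 [r_le ->]]].
  exists x => //; split=> //.
  by have := cvnorm_ge0 (A *m x); nra.
by exists (cvnorm (A *m x)); split=> //; exists x.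
Qed.

Lemma W_ge_convex : convex2 (W_ge A r).
Proof.
move=> _ _ t /W_geP[x /cvnorm_eq1 x_1 [rx ->]] /W_geP[y /cvnorm_eq1 y_1 [ry ->]].
move=> t_ge0 t_le1; have t01 : 0 <= t <= 1 by apply/andP.
have [z [/cvnorm_eq1 z_1 Re_z Im_z Az]] := span_convex_step A x_1 y_1 t01.
apply/W_geP; exists z => //; split; last by rewrite !qformE Re_z Im_z.
rewrite -!cvnorm_sqr in Az.
have Ax_ge0 := cvnorm_ge0 (A *m x); have Ay_ge0 := cvnorm_ge0 (A *m y).
have Az_ge0 := cvnorm_ge0 (A *m z).
have [r_le0|r_gt0] := leP r 0; first exact: le_trans r_le0 Az_ge0.
have rx2 : r ^+ 2 <= cvnorm (A *m x) ^+ 2 by nra.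
have ry2 : r ^+ 2 <= cvnorm (A *m y) ^+ 2 by nra.
have rz2 : r ^+ 2 <= cvnorm (A *m z) ^+ 2 by nra.
by nra.
Qed.

Lemma W_ge_compact : compact (W_ge A r).
Proof.
pose K := [set v : 'rV[R]_(n + n) |
  cvnorm (cV_of_rV v) = 1 /\ r <= cvnorm (A *m cV_of_rV v)].
pose f v := (Re (qform A (cV_of_rV v)), Im (qform A (cV_of_rV v))).
have -> : W_ge A r = f @` K.
  apply/seteqP; split=> [_ /W_geP[x x_1 [rx ->]] | _ [v [v_1 rv] <-]].
    by exists (rV_of_cV x); rewrite /K /f /= rV_of_cVK.
  by apply/W_geP; exists (cV_of_rV v).
have cont_cV := @ccontinuous_cV_of_rV R n.
apply: continuous_compact.
  have [qRe qIm] : ccontinuous (fun v => qform A (@cV_of_rV R n v)).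
    under eq_fun do rewrite qformE.
    exact: ccontinuous_cdot cont_cV (ccontinuous_cV_mulmx A cont_cV).
  apply: continuous_subspaceT => v.
  apply: (@cvg_pair _ _ _ _ (nbhs (Re (qform A (cV_of_rV v))))
    (nbhs (Im (qform A (cV_of_rV v))))); [exact: nbhs_filter | exact: qRe | exact: qIm].
have cube := @rV_compact _ (n + n) (fun=> `[-1 : R, 1]%classic)
  (fun=> @segment_compact R (-1) 1).
apply: (subclosed_compact _ cube).
  have cont_Anorm := continuous_cvnorm (ccontinuous_cV_mulmx A cont_cV).
  have -> : K = (fun v => cvnorm (cV_of_rV v)) @^-1` [set x | x = 1]
    `&` (fun v => cvnorm (A *m cV_of_rV v)) @^-1` [set x | r <= x] by [].
  apply: closedI; apply: preimage_closed; [| exact: closed_eq | | exact: closed_ge].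
    by move=> v _; exact: continuous_cvnorm cont_cV v.
  by move=> v _; exact: cont_Anorm.
move=> v [v_1 _] j; rewrite set_itvcc /=.
have : v ord0 j ^+ 2 <= 1.
  rewrite -(expr1n _ 2) -v_1 cvnorm_cV_of_rV (bigD1 j) //= lerDl.
  by rewrite sumr_ge0 // => k _; rewrite sqr_ge0.
by move=> vj_sq; apply/andP; split; nra.
Qed.

End ProjectedShell.

Unset Implicit Arguments.

Theorem proposition1 (R : realType) (n : nat) (A : 'M[R[i]]_n) (r : R) :
  compact (W_ge A r) /\ convex2 (W_ge A r).
Proof. by split; [exact: W_ge_compact | exact: W_ge_convex]. Qed.
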